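(* Let $d\ge1$, $D=\{1,\dots,d\}$, let $\Pi=(\Pi_{ij})$ and $Q$ be $d\times d$ stochastic matrices indexed by $D$, let $\pi=(\pi_j)_{j\in D}$ be a probability vector, and let $\varphi^{(O)}_H$ be the quantum Markov chain on $\mathcal{A}_H=\bigotimes_{\mathbb{N}}\mathcal{M}_d$ with initial state $\varphi_{H,0}(\cdot)=\operatorname{Tr}(W_0\,\cdot)$, $W_0=\sum_{j\in D}\pi_je_{jj}$, and transition expectation $\mathcal{E}^{(O)}_H(a\otimes b)=a\diamond P_{H,O}(\mathbf{1}_d)\diamond P_H(b)$. Then for all $n\in\mathbb{N}$ and $j_0,\dots,j_n\in D$, $$\varphi^{(O)}_H\Big(\prod_{m=0}^nj_{H_m}(e_{j_mj_m})\Big)=\pi_{j_0}\prod_{m=0}^{n-1}\Pi_{j_mj_{m+1}}.$$ That is, the restriction of $\varphi^{(O)}_H$ to the diagonal algebra $\bigotimes_{\mathbb{N}}\mathcal{D}_e$ is the classical Markov chain with initial distribution $\pi$ and transition matrix $\Pi$.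
   Context: $\mathcal{M}_d$: complex $d\times d$ matrices with identity $\mathbf{1}_d$ and matrix units $e_{ij}$; $\mathcal{D}_e=\{\sum_hx_he_{hh}\}$ is its diagonal subalgebra. $\diamond$ is the Schur (entrywise) product; stochastic matrices have nonnegative entries and row sums $1$. $P_H(A)=\sum_{i,j,k,l\in D}\sqrt{\Pi_{ik}\Pi_{jl}}\,a_{kl}e_{ij}$, $P_{H,O}(B)=\sum_{i,j,k,l\in D}\sqrt{Q_{ik}Q_{jl}}\,b_{kl}e_{ij}$. $j_{H_m}(a)$ denotes $a$ at site $m$ of $\mathcal{A}_H$ with identities elsewhere, and $\varphi^{(O)}_H(j_{H_0}(a_0)\cdots j_{H_n}(a_n))=\varphi_{H,0}(\mathcal{E}^{(O)}_H(a_0\otimes\mathcal{E}^{(O)}_H(a_1\otimes\cdots\mathcal{E}^{(O)}_H(a_n\otimes\mathbf{1}_d)\cdots)))$. *)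

From mathcomp Require Import all_boot all_algebra complex.
From mathcomp Require Import reals.
Set Implicit Arguments. Unset Strict Implicit. Unset Printing Implicit Defensive.
Import GRing.Theory Num.Theory.
Local Open Scope ring_scope.

Section Defs.
Variable R : realType.
Local Notation C := (R[i]).
Variable d : nat.

Definition stochastic (P : 'M[C]_d) : Prop :=
  (forall i j, 0 <= P i j) /\ (forall i, \sum_(j < d) P i j = 1).

Definition prob_vec (p : 'rV[C]_d) : Prop :=
  (forall j, 0 <= p 0 j) /\ \sum_(j < d) p 0 j = 1.

Definition schur (A B : 'M[C]_d) : 'M[C]_d := \matrix_(i, j) (A i j * B i j).

Definition P_H (Pi A : 'M[C]_d) : 'M[C]_d :=
  \matrix_(i, j) \sum_(k < d) \sum_(l < d) sqrtC (Pi i k * Pi j l) * A k l.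

Definition P_HO (Q B : 'M[C]_d) : 'M[C]_d :=
  \matrix_(i, j) \sum_(k < d) \sum_(l < d) sqrtC (Q i k * Q j l) * B k l.

Definition E_HO (Pi Q a b : 'M[C]_d) : 'M[C]_d :=
  schur (schur a (P_HO Q 1%:M)) (P_H Pi b).

Definition W0 (p : 'rV[C]_d) : 'M[C]_d := diag_mx p.
Definition phi_H0 (p : 'rV[C]_d) (x : 'M[C]_d) : C := \tr (W0 p *m x).

(* phi^(O)_H (j_{H_0}(a_0) ... j_{H_n}(a_n))
   = phi_{H,0}(E(a_0 ⊗ E(a_1 ⊗ ... E(a_n ⊗ 1) ...))) , for as = [:: a_0; ...; a_n] *)
Definition phi_HO (p : 'rV[C]_d) (Pi Q : 'M[C]_d) (as_ : seq 'M[C]_d) : C :=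
  phi_H0 p (foldr (fun a acc => E_HO Pi Q a acc) 1%:M as_).

End Defs.

From mathcomp Require Import all_boot all_algebra complex.
From mathcomp Require Import reals.
Import GRing.Theory Num.Theory.
Local Open Scope ring_scope.

(* On diagonal matrices, the diagonal of [P_H P] is the classical transition
   operator [b |-> P b], because [sqrtC (P j k * P j k) = P j k] for nonnegative
   entries.  As [P_{H,O}(1)] has unit diagonal, [E_HO (e_ii (x) c e_jj) = Pi_ij c e_ii],
   so the nested expectation along [j_0, ..., j_n] is the path weight times
   [e_{j_0 j_0}], on which the initial state takes the value [pi_{j_0}]. *)

Section DiagonalRestriction.
Variable R : realType.
Local Notation C := (R[i]).
Variable d : nat.
Implicit Types (P Pi Q B : 'M[C]_d) (i j : 'I_d) (c : C).

Lemma sum_mul_delta_diag (F : 'I_d -> C) i :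
  \sum_(k < d) F k * (delta_mx i i : 'M[C]_d) k k = F i.
Proof.
rewrite (bigD1 i) //= big1 => [|k neq_ki]; first by rewrite mxE !eqxx mulr1 addr0.
by rewrite mxE (negbTE neq_ki) mulr0.
Qed.

Lemma P_HO_P_H : @P_HO R d = @P_H R d.
Proof. by []. Qed.

Lemma P_H_diag P B j : (forall k, 0 <= P j k) -> is_diag_mx B ->
  P_H P B j j = \sum_(k < d) P j k * B k k.
Proof.
move=> P_ge0 /is_diag_mxP B_diag; rewrite mxE; apply: eq_bigr => k _.
rewrite (bigD1 k) //= big1 => [|l neq_lk]; last by rewrite B_diag ?mulr0 // eq_sym.
by rewrite -expr2 sqrCK // addr0.
Qed.

Lemma scale_delta_is_diag c i : is_diag_mx (c *: delta_mx i i : 'M[C]_d).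
Proof.
apply/is_diag_mxP => k l neq_kl; rewrite !mxE.
case: (eqVneq k i) neq_kl => [-> /negPf neq_il | _ _] /=; last by rewrite mulr0.
by rewrite eq_sym -val_eqE /= neq_il mulr0.
Qed.

Lemma stochastic_P_H1 P j : stochastic P -> P_H P 1%:M j j = 1.
Proof.
case=> P_ge0 P_sum1; rewrite P_H_diag ?scalar_mx_is_diag //.
by under eq_bigr do rewrite mxE eqxx mulr1; exact: P_sum1.
Qed.

Lemma stochastic_P_H_delta P c i j : stochastic P ->
  P_H P (c *: delta_mx j j) i i = P i j * c.
Proof.
case=> P_ge0 _; rewrite P_H_diag ?scale_delta_is_diag //.
under eq_bigr do rewrite mxE mulrA.
by rewrite sum_mul_delta_diag.
Qed.

Lemma E_HO_delta Pi Q j B :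
  E_HO Pi Q (delta_mx j j) B = (P_HO Q 1%:M j j * P_H Pi B j j) *: delta_mx j j.
Proof.
apply/matrixP => a b; rewrite !mxE.
by case: (eqVneq a j) => [->|_]; case: (eqVneq b j) => [->|_];
  rewrite ?mul0r ?mulr0 ?mulr1 ?mul1r.
Qed.

Section Stochastic.
Variables Pi Q : 'M[C]_d.
Hypotheses (hPi : stochastic Pi) (hQ : stochastic Q).

Lemma E_HO_delta_stochastic j B :
  E_HO Pi Q (delta_mx j j) B = P_H Pi B j j *: delta_mx j j.
Proof. by rewrite E_HO_delta P_HO_P_H stochastic_P_H1 // mul1r. Qed.

Lemma foldr_E_HO_delta (js : nat -> 'I_d) n m :
  foldr (fun k B => E_HO Pi Q (delta_mx (js k) (js k)) B) 1%:M (iota m n.+1)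
  = (\prod_(i < n) Pi (js (m + i)%N) (js (m + i).+1)) *: delta_mx (js m) (js m).
Proof.
elim: n m => [|n IHn] m.
  by rewrite /= E_HO_delta_stochastic stochastic_P_H1 // big_ord0.
rewrite (_ : iota m n.+2 = [:: m] ++ iota m.+1 n.+1) // foldr_cat IHn /= E_HO_delta_stochastic stochastic_P_H_delta //.
rewrite big_ord_recl addn0; congr (_ * _ *: _).
by apply: eq_bigr => i _; rewrite addSnnS.
Qed.

End Stochastic.

Lemma phi_H0_scale_delta (p : 'rV[C]_d) c j :
  phi_H0 p (c *: delta_mx j j) = c * p 0 j.
Proof.
rewrite /phi_H0 /W0 -scalemxAr mxtraceZ mul_diag_mx /mxtrace.
under eq_bigr do rewrite mxE.
by rewrite sum_mul_delta_diag.
Qed.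

End DiagonalRestriction.

Theorem mainTheorem9 (R : realType) (d : nat) (hd : (0 < d)%N)
  (Pi Q : 'M[R[i]]_d) (p : 'rV[R[i]]_d)
  (hPi : stochastic Pi) (hQ : stochastic Q) (hp : prob_vec p)
  (n : nat) (js : nat -> 'I_d) :
  phi_HO p Pi Q [seq delta_mx (js m) (js m) | m <- iota 0 n.+1]
  = p 0 (js 0%N) * \prod_(m < n) Pi (js m) (js m.+1).
Proof.
rewrite /phi_HO foldr_map foldr_E_HO_delta // phi_H0_scale_delta mulrC.
by under eq_bigr do rewrite add0n.
Qed.
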